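(* Let $G$ be a finite subset of $\mathbb{N}^2$ that has at least one connected v-bridge. If $G$ contains a connected component $C$ (of the full grid graph of $G$) such that $C\cap(\{r_G\}\times\mathbb{N})\neq\emptyset$, $C\cap(\mathbb{N}\times\{t_G\})\neq\emptyset$ and $C\cap(\mathbb{N}\times\{b_G\})=\emptyset$, then there exists a point $\vec x_{NE}\in G\setminus C$ such that $E(\vec x_{NE})\notin G$, $\vec x_{NE}\in\mathbb{N}\times\{t_G\}$ and $\vec x_{NE}\notin\{r_G\}\times\mathbb{N}$.
   Context: The full grid graph of $V\subseteq\mathbb{Z}^2$ has vertex set $V$ and an edge between $\vec x,\vec y$ iff $\|\vec x-\vec y\|=1$; paths and connected components are taken in this graph. For a finite $S\subseteq\mathbb{Z}^2$ let $l_S=\min_{(x,y)\in S}x$, $r_S=\max_{(x,y)\in S}x$, $b_S=\min_{(x,y)\in S}y$, $t_S=\max_{(x,y)\in S}y$. An h-bridge of $S$ is a subset of $S$ of the form $\{(l_S,y),(r_S,y)\}$; a v-bridge is a subset of $S$ of the form $\{(x,b_S),(x,t_S)\}$. A bridge is connected if there is a simple path in (the full grid graph of) $S$ connecting its two points. Directions: $N(x,y)=(x,y+1)$, $E(x,y)=(x+1,y)$, $S(x,y)=(x,y-1)$, $W(x,y)=(x-1,y)$. *)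

(* Points of N^2 are pairs (x,y) : nat * nat.
   A finite subset G of N^2 is given by a (finite) list of its points;
   membership is  p \in G  (duplicates/order are irrelevant). *)
From mathcomp Require Import all_boot.
Set Implicit Arguments. Unset Strict Implicit. Unset Printing Implicit Defensive.

Definition point := (nat * nat)%type.

Definition dirN (p : point) : point := (p.1, p.2.+1).
Definition dirE (p : point) : point := (p.1.+1, p.2).
Definition dirS (p : point) : point := (p.1, p.2.-1).
Definition dirW (p : point) : point := (p.1.-1, p.2).

Definition grid_adj (p q : point) : bool :=
  ((p.1 == q.1) && ((p.2 == q.2.+1) || (q.2 == p.2.+1))) ||
  ((p.2 == q.2) && ((p.1 == q.1.+1) || (q.1 == p.1.+1))).

(* extremal coordinates of a finite set (only meaningful for nonempty S) *)
Definition lS (S : seq point) : nat := \big[minn/(head (0,0) S).1]_(p <- S) p.1.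
Definition rS (S : seq point) : nat := \max_(p <- S) p.1.
Definition bS (S : seq point) : nat := \big[minn/(head (0,0) S).2]_(p <- S) p.2.
Definition tS (S : seq point) : nat := \max_(p <- S) p.2.

Definition simple_path_in (S : seq point) (x y : point) (s : seq point) : Prop :=
  all (fun p => p \in S) (x :: s) /\ path grid_adj x s /\ uniq (x :: s) /\ last x s = y.

Definition connected_in (S : seq point) (x y : point) : Prop :=
  exists s, simple_path_in S x y s.

Definition has_connected_vbridge (S : seq point) : Prop :=
  exists x, (x, bS S) \in S /\ (x, tS S) \in S /\ connected_in S (x, bS S) (x, tS S).

Definition is_component (S : seq point) (C : point -> Prop) : Prop :=
  exists c, c \in S /\ forall p, C p <-> connected_in S c p.

(* The bridge path P from (x0, b) to (x0, t) acts as a Jordan arc: the parity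
   of the number of crossings of P with the half-line going west from a point
   off P does not change along a grid edge avoiding P, unless the edge passes
   the row of an endpoint of P east of that endpoint.  C misses P, since P
   reaches row b.  If no point xNE exists, row t lies in G from x0 to r, hence
   outside C, so C never passes east of an endpoint and the parity is constant
   on C.  But it is 0 at a point of C on row t, which lies weakly above P, and
   1 at the point (r, y) of C, where b <= y < t and P lies weakly west of
   column r. *)

From mathcomp Require Import all_boot zify.

Set Implicit Arguments.
Unset Strict Implicit.
Unset Printing Implicit Defensive.

Ltac nat_bool_cases :=
  repeat match goal with
  | |- context [@eq_op _ ?x ?y] => case: (@eqP nat x y) => ?
  | |- context [?x <= ?y] => case: (@leP x y) => ?
  end; rewrite /=; try done; try (exfalso; lia).

Fixpoint path_parity {T : Type} (e : rel T) (x : T) (s : seq T) : bool :=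
  if s is y :: s' then e x y (+) path_parity e y s' else false.

Section PathParity.
Variable T : eqType.
Implicit Types (e : rel T) (x : T) (s : seq T).

Lemma path_parity_telescope (r e : rel T) (f : T -> bool) x s :
  path r x s -> {in x :: s &, forall a b, r a b -> e a b = f a (+) f b} ->
  path_parity e x s = f x (+) f (last x s).
Proof.
elim: s x => [|y s IHs] x /=; first by rewrite addbb.
case/andP=> rxy ry_s e_f; rewrite IHs //; last first.
  by move=> a b a_s b_s; apply: e_f; rewrite inE ?a_s ?b_s orbT.
by rewrite e_f ?mem_head ?inE ?eqxx ?orbT // -addbA addKb.
Qed.

Lemma eq_in_path_parity e1 e2 x s :
  {in x :: s &, e1 =2 e2} -> path_parity e1 x s = path_parity e2 x s.
Proof.
elim: s x => [|y s IHs] x //= e12.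
rewrite e12 ?mem_head ?inE ?eqxx ?orbT // IHs //.
by move=> a b a_s b_s; apply: e12; rewrite inE ?a_s ?b_s orbT.
Qed.

Lemma path_parity_addb e1 e2 x s :
  path_parity (fun a b => e1 a b (+) e2 a b) x s =
  path_parity e1 x s (+) path_parity e2 x s.
Proof.
by elim: s x => [|y s IHs] x //=; rewrite IHs addbACA.
Qed.

End PathParity.

Lemma grid_adjC : symmetric grid_adj.
Proof. by case=> a b [c d]; rewrite /grid_adj /=; nat_bool_cases. Qed.

Lemma grid_adj_cases u v : grid_adj u v ->
  [\/ u = dirN v, v = dirN u, u = dirE v | v = dirE u].
Proof.
case: u v => [a b] [c d]; rewrite /grid_adj /dirN /dirE /=.
by case/orP=> /andP [/eqP -> /orP [] /eqP ->]; constructor.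
Qed.

Definition crosses_ray (p a b : point) : bool :=
  (a.1 == b.1) && (a.1 < p.1) &&
  ([&& a.2 == p.2 & b.2 == p.2.+1] || [&& b.2 == p.2 & a.2 == p.2.+1]).

Definition west_of (p e : point) : bool := (e.1 < p.1) && (e.2 == p.2).

Lemma crosses_ray_side p a b : grid_adj a b -> a.1 < p.1 -> b.1 < p.1 ->
  crosses_ray p a b = (p.2 < a.2) (+) (p.2 < b.2).
Proof.
case: p => x k /grid_adj_cases [] ->; case: a b => [a1 a2] [b1 b2];
  rewrite /crosses_ray /dirN /dirE /=; nat_bool_cases.
Qed.

Lemma crosses_rayE p a b : a != p -> b != p ->
  crosses_ray (dirE p) a b = crosses_ray p a b.
Proof.
case: p a b => [x k] [a1 a2] [b1 b2]; rewrite /crosses_ray !xpair_eqE /=.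
nat_bool_cases.
Qed.

Lemma crosses_rayN p a b : grid_adj a b -> a != dirN p -> b != dirN p ->
  crosses_ray p a b (+) crosses_ray (dirN p) a b =
  west_of (dirN p) a (+) west_of (dirN p) b.
Proof.
case: p => x k /grid_adj_cases [] ->; case: a b => [a1 a2] [b1 b2];
  rewrite /crosses_ray /west_of /dirN /dirE !xpair_eqE /=; nat_bool_cases.
Qed.

Lemma crosses_ray_above p a b : a.2 <= p.2 -> b.2 <= p.2 ->
  crosses_ray p a b = false.
Proof. case: p a b => [x k] [a1 a2] [b1 b2]; rewrite /crosses_ray /=; nat_bool_cases. Qed.

Section Winding.
Variables (u : point) (s : seq point).
Hypothesis walk_us : path grid_adj u s.

(* The crossings of the walk u :: s with the half-line {(x, p.2 + 1/2) | x < p.1}. *)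
Definition winding (p : point) : bool := path_parity (crosses_ray p) u s.

Lemma windingE p : p \notin u :: s -> winding (dirE p) = winding p.
Proof.
move=> p_off; apply: eq_in_path_parity => a b a_us b_us.
by apply: crosses_rayE; apply: contraNneq p_off => <-.
Qed.

Lemma windingN p : dirN p \notin u :: s ->
  winding (dirN p) = winding p (+) west_of (dirN p) u (+) west_of (dirN p) (last u s).
Proof.
move=> Np_off.
have telescope : winding p (+) winding (dirN p) =
    west_of (dirN p) u (+) west_of (dirN p) (last u s).
  rewrite /winding -path_parity_addb; apply: (path_parity_telescope walk_us).
  by move=> a b a_us b_us ab; apply: crosses_rayN => //;
    apply: contraNneq Np_off => <-.
by rewrite -addbA -telescope addKb.
Qed.

Lemma winding_west p : {in u :: s, forall q, q.1 < p.1} ->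
  winding p = (p.2 < u.2) (+) (p.2 < (last u s).2).
Proof.
move=> west; apply: (path_parity_telescope (f := fun q => p.2 < q.2) walk_us).
by move=> a b a_us b_us ab; apply: crosses_ray_side (west a a_us) (west b b_us).
Qed.

Lemma winding_east p : {in u :: s, forall q, q.1 <= p.1} -> p \notin u :: s ->
  winding p = (p.2 < u.2) (+) (p.2 < (last u s).2).
Proof. by move=> east p_off; rewrite -windingE // winding_west. Qed.

Lemma winding_above p : {in u :: s, forall q, q.2 <= p.2} -> winding p = false.
Proof.
move=> below; rewrite /winding (path_parity_telescope (f := fun=> false) walk_us) //.
by move=> a b a_us b_us _; apply: crosses_ray_above; [apply: below..].
Qed.

End Winding.

Section Reach.
Variable S : seq point.

Definition reach (x y : point) : Prop := exists s,
  [/\ all (fun p => p \in S) (x :: s), path grid_adj x s & last x s = y].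

Lemma reach_refl x : x \in S -> reach x x.
Proof. by move=> xS; exists [::]; rewrite /= xS. Qed.

Lemma reach_mem x y : reach x y -> y \in S.
Proof. by case=> s [s_S _ <-]; apply: (allP s_S); apply: mem_last. Qed.

Lemma reach_rcons x y z : reach x y -> grid_adj y z -> z \in S -> reach x z.
Proof.
case=> s [s_S walk_s <-] yz zS; exists (rcons s z).
by rewrite -rcons_cons all_rcons zS s_S rcons_path walk_s yz last_rcons.
Qed.

Lemma reach_trans x y z : reach x y -> reach y z -> reach x z.
Proof.
case=> s1 [s1_S walk1 <-] [s2 [s2_S walk2 <-]]; exists (s1 ++ s2); split.
- by rewrite -cat_cons all_cat s1_S; case/andP: s2_S.
- by rewrite cat_path walk1 walk2.
- by rewrite last_cat.
Qed.

Lemma reach_sym x y : reach x y -> reach y x.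
Proof.
case=> s; elim: s x => [|z s IHs] x [/= /andP [xS s_S]].
  by move=> _ <-; apply: reach_refl.
case/andP=> xz walk_s last_s.
by apply: (reach_rcons (IHs z (And3 s_S walk_s last_s))) xS; rewrite grid_adjC.
Qed.

Lemma reach_walk x s z : z \in x :: s ->
  all (fun p => p \in S) (x :: s) -> path grid_adj x s -> reach x z.
Proof.
case/splitPl=> s1 s2 <-; rewrite -cat_cons all_cat cat_path.
by case/andP=> s1_S _ /andP [walk1 _]; exists s1.
Qed.

Lemma connected_inE x y : connected_in S x y <-> reach x y.
Proof.
split=> [[s [s_S [walk_s [_ last_s]]]]|[s [s_S walk_s <-]]]; first by exists s.
case: (shortenP walk_s) => s' walk_s' uniq_s' sub_s'; exists s'; do !split=> //.
apply/allP=> z; rewrite inE => /predU1P [->|/sub_s' z_s].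
  by case/andP: s_S.
by apply: (allP s_S); rewrite inE z_s orbT.
Qed.

End Reach.

Section Component.
Variables (G : seq point) (C : point -> Prop) (c : point).
Hypothesis C_reach : forall p, C p <-> reach G c p.

Lemma component_mem p : C p -> p \in G.
Proof. by move/C_reach/reach_mem. Qed.

Lemma component_reach p q : C p -> reach G p q -> C q.
Proof. by move=> /C_reach cp pq; apply/C_reach/(reach_trans cp). Qed.

Lemma component_adj p q : C p -> grid_adj p q -> q \in G -> C q.
Proof.
move=> Cp pq qG; apply: (component_reach Cp).
exact: reach_rcons (reach_refl (component_mem Cp)) pq qG.
Qed.

Lemma component_invariant (T : Type) (f : point -> T) :
  (forall p q, C p -> C q -> grid_adj p q -> f p = f q) ->
  forall p, C p -> f p = f c.
Proof.
move=> f_adj p /C_reach [s [s_S walk_s <-]].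
have: C c by apply/C_reach/reach_refl; case/andP: s_S.
elim: s c s_S walk_s => [|y s IHs] x //= /andP [_ s_S] /andP [xy walk_s] Cx.
have Cy : C y by apply: component_adj Cx xy _; case/andP: s_S.
by rewrite (IHs y) // (f_adj x y).
Qed.

Lemma component_walk_off u s : all (fun p => p \in G) (u :: s) ->
  path grid_adj u s -> ~ C u -> forall p, C p -> p \notin u :: s.
Proof.
move=> s_G walk_s u_C p Cp; apply/negP=> p_s; apply: u_C.
exact: (component_reach Cp (reach_sym (reach_walk p_s s_G walk_s))).
Qed.

Lemma component_row_exit x0 k X : (x0, k) \in G -> ~ C (x0, k) -> x0 <= X ->
  (exists q, [/\ q \in G, ~ C q, dirE q \notin G, q.2 = k & q.1 < X]) \/
  (forall x, x0 <= x <= X -> ~ C (x, k)).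
Proof.
move=> x0_G x0_C le_x0X.
suffices /(_ (X - x0)) : forall n,
    (exists q, [/\ q \in G, ~ C q, dirE q \notin G, q.2 = k & q.1 < n + x0]) \/
    (forall x, x0 <= x <= n + x0 -> (x, k) \in G /\ ~ C (x, k)).
  by rewrite subnK // => -[exit | free]; [left | right=> x /free []].
elim=> [|n [[q [qG qC Eq qk ltq]] | free]].
- by right=> x; rewrite add0n -eqn_leq => /eqP <-.
- by left; exists q; split=> //; rewrite addSn ltnS ltnW.
have [xn_G xn_C] : (n + x0, k) \in G /\ ~ C (n + x0, k).
  by apply: free; rewrite leq_addl leqnn.
case En: (((n + x0).+1, k) \in G); last first.
  by left; exists (n + x0, k); split; rewrite /dirE //= En.
right=> x /andP [le_x0x]; rewrite addSn leq_eqVlt ltnS => /orP [/eqP -> | le_xn].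
  split=> // Cn; apply: xn_C; apply: component_adj Cn _ xn_G.
  by rewrite /grid_adj /= !eqxx orbT.
by apply: free; rewrite le_x0x.
Qed.

Lemma winding_component u s : path grid_adj u s ->
  (forall p, C p -> p \notin u :: s) ->
  (forall e p, e \in [:: u; last u s] -> C p -> p.2 = e.2 -> p.1 <= e.1) ->
  forall p, C p -> winding u s p = winding u s c.
Proof.
move=> walk_us C_off C_east.
have west_of_end e p : e \in [:: u; last u s] -> C p -> west_of p e = false.
  move=> e_end Cp; rewrite /west_of; case: eqP => [e2 | _]; last by rewrite andbF.
  by rewrite andbT ltnNge C_east.
have windingN_C p : C (dirN p) -> winding u s (dirN p) = winding u s p.
  move=> CNp; rewrite windingN ?C_off // !west_of_end ?inE ?eqxx ?orbT //.
  by rewrite !addbF.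
apply: component_invariant => p q Cp Cq /grid_adj_cases [] pq; subst.
- exact: windingN_C.
- by rewrite windingN_C.
- by rewrite windingE ?C_off.
- by rewrite windingE ?C_off.
Qed.

End Component.

Lemma bS_leq S p : p \in S -> bS S <= p.2.
Proof.
rewrite /bS; move: (head _ S).2 => i; elim: S => [|a S IHS] //.
rewrite big_cons inE => /predU1P [-> | /IHS le_p]; first exact: geq_minl.
exact: leq_trans (geq_minr _ _) le_p.
Qed.

Lemma leq_tS S p : p \in S -> p.2 <= tS S.
Proof. by move=> pS; apply: leq_bigmax_seq. Qed.

Lemma leq_rS S p : p \in S -> p.1 <= rS S.
Proof. by move=> pS; apply: leq_bigmax_seq. Qed.

Theorem mainTheorem4 (G : seq point) (C : point -> Prop) :
  has_connected_vbridge G ->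
  is_component G C ->
  (exists y, C (rS G, y)) ->
  (exists x, C (x, tS G)) ->
  ~ (exists x, C (x, bS G)) ->
  exists xNE : point,
    xNE \in G /\ ~ C xNE /\ dirE xNE \notin G /\ xNE.2 = tS G /\ xNE.1 <> rS G.
Proof.
move=> [x0 [bot_G [top_G /connected_inE [s [s_G walk_s last_s]]]]] [c [_ C_conn]].
move=> [y Cy] [x1 Cx1] no_bot.
have C_reach p : C p <-> reach G c p by rewrite -connected_inE.
have bot_C : ~ C (x0, bS G) by move=> Cb; apply: no_bot; exists x0.
have C_off := component_walk_off C_reach s_G walk_s bot_C.
have top_C : ~ C (x0, tS G) by move/C_off; rewrite -last_s mem_last.
have [[q [qG qC Eq qt lt_qr]] | top_off] :=
  component_row_exit C_reach top_G top_C (leq_rS top_G).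
  by exists q; do !split=> //; apply/eqP; rewrite ltn_eqF.
have C_east e p : e \in [:: (x0, bS G); last (x0, bS G) s] -> C p ->
    p.2 = e.2 -> p.1 <= e.1.
  rewrite last_s !inE => /orP [] /eqP -> Cp /= p2.
    by case: no_bot; exists p.1; rewrite -p2 -surjective_pairing.
  rewrite leqNgt; apply/negP=> lt_x0p; apply: (top_off p.1).
    by rewrite ltnW // leq_rS // (component_mem C_reach Cp).
  by rewrite -p2 -surjective_pairing.
have W_const := winding_component C_reach walk_s C_off C_east.
have W_top : winding (x0, bS G) s (x1, tS G) = false.
  by apply: (winding_above walk_s) => q /(allP s_G) /leq_tS.
have W_right : winding (x0, bS G) s (rS G, y) = true.
  rewrite winding_east ?C_off //; last by move=> q /(allP s_G) /leq_rS.
  have yG := component_mem C_reach Cy.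
  have /andP [le_by le_yt] : bS G <= y <= tS G by rewrite (bS_leq yG) (leq_tS yG).
  rewrite last_s /= ltnNge le_by /= ltn_neqAle le_yt andbT.
  apply/eqP=> yt; apply: (top_off (rS G)); last by rewrite -yt.
  by rewrite leqnn andbT (leq_rS top_G).
by move: (W_const _ Cx1) (W_const _ Cy); rewrite W_top W_right => <-.
Qed.
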